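(* Consider the clock protocol (defined in the context) run by a population of $n$ agents with a fixed constant drip probability $p\in(0,1]$. Fix a minute index $i\ge 0$. With very high probability, for all times $t$ of the execution: if $n^{-0.45}\le c_{\ge i}(t)\le 0.1$, then $$c_{\ge i+1}(t)\le 0.9\,p\,c_{\ge i}(t)^2+d_{\ge i+1}(t).$$
   Context: Clock protocol: $n$ agents, each with an integer field $\mathtt{minute}$, initially $0$. At each step an ordered pair of distinct agents is chosen uniformly at random to interact; parallel time $t$ corresponds to $tn$ interactions. Transitions: (drip) if both agents have $\mathtt{minute}=i$, then with probability $p$ one of them moves to $\mathtt{minute}=i+1$ (i.e. $i,i\to i,i+1$); (epidemic) if the agents have minutes $j>k$, the agent with minute $k$ sets its minute to $j$ (i.e. $j,k\to j,j$). For a minute $i$ and time $t$, $c_{\ge i}(t)$ is the fraction of agents with $\mathtt{minute}\ge i$ at time $t$. The set of early drip agents $D_{\ge i+1}(t)$ consists of the agents that, at some time $\le t$, moved above minute $i$ via a drip reaction occurring at a time $s$ with $c_{\ge i}(s)<n^{-0.45}$, together with agents that were brought above minute $i$ (at a time $\le t$) via an epidemic reaction with another early drip agent; $d_{\ge i+1}(t)=|D_{\ge i+1}(t)|/n$. ''With very high probability'' means with probability $1-n^{-\omega(1)}$ as $n\to\infty$ ($p$ fixed); the execution is considered over polynomially many (in $n$) minutes. *)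

From HB Require Import structures.
From mathcomp Require Import all_boot all_order all_algebra.
From mathcomp Require Import reals.
From mathcomp Require exp.
Set Implicit Arguments. Unset Strict Implicit. Unset Printing Implicit Defensive.
Import Order.TTheory GRing.Theory Num.Theory.
Local Open Scope ring_scope.

(** A configuration maps each
    agent to its minute. One interaction is described by a triple
    ((a, b), coin): the ordered pair (initiator a, responder b) and the
    Bernoulli(p) coin used by the drip reaction. *)
Definition config (n : nat) := 'I_n -> nat.
Definition interaction (n : nat) := ('I_n * 'I_n * bool)%type.

Definition init_config (n : nat) : config n := fun _ => 0%N.

(** One transition.  drip: i,i -> i,i+1 (the responder moves, if coin);
    epidemic: j,k -> j,j for j > k. *)
Definition clock_step (n : nat) (st : config n) (x : interaction n) : config n :=
  let: (a, b, coin) := x in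
  if st a == st b then
    (if coin then fun y => if y == b then (st b).+1 else st y else st)
  else if (st b < st a)%N then fun y => if y == b then st a else st y
  else fun y => if y == a then st b else st y.

Definition c_ge (R : realType) (n : nat) (i : nat) (st : config n) : R :=
  #|[pred y | (i <= st y)%N]|%:R / n%:R.

Definition thr (R : realType) (n : nat) : R := exp.powR (n%:R) (- (45%:R / 100%:R)).

(** Update of the set D_{>= i+1} of early drip agents along one interaction
    (x applied to configuration st, the state just before the interaction):
    - a drip moving the responder from minute i to i+1 while c_{>=i} < n^{-0.45};
    - an epidemic bringing an agent from minute <= i to above i, where the
      other (higher) agent is already an early drip agent. *)
Definition early_step (R : realType) (n : nat) (i : nat) (st : config n)
    (D : {set 'I_n}) (x : interaction n) : {set 'I_n} :=
  let: (a, b, coin) := x in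
  if st a == st b then
    (if [&& coin, st b == i & c_ge R i st < thr R n] then b |: D else D)
  else if (st b < st a)%N then
    (if [&& (st b <= i)%N, (i < st a)%N & a \in D] then b |: D else D)
  else
    (if [&& (st a <= i)%N, (i < st b)%N & b \in D] then a |: D else D).

Definition run (R : realType) (n : nat) (i : nat) (s : seq (interaction n))
    : config n * {set 'I_n} :=
  foldl (fun cd x => (clock_step cd.1 x, early_step R i cd.1 cd.2 x))
        (@init_config n, set0) s.

Definition iweight (R : realType) (n : nat) (p : R) (x : interaction n) : R :=
  let: (a, b, coin) := x in
  if a != b then (n%:R * (n%:R - 1))^-1 * (if coin then p else 1 - p) else 0.

Definition Prob (R : realType) (n : nat) (p : R) (T : nat)
    (E : pred (T.-tuple (interaction n))) : R :=
  \sum_(w : T.-tuple (interaction n) | E w) \prod_(x <- w) iweight p x.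

(** The bad event: at some time t (after k <= T interactions, i.e. parallel
    time k/n), n^{-0.45} <= c_{>=i}(t) <= 0.1 but
    c_{>=i+1}(t) > 0.9 p c_{>=i}(t)^2 + d_{>=i+1}(t). *)
Definition bad (R : realType) (n : nat) (p : R) (i : nat) (T : nat)
    (w : T.-tuple (interaction n)) : bool :=
  [exists k : 'I_T.+1,
    let cd := run R i (take k w) in
    let c := c_ge R i cd.1 in
    [&& thr R n <= c, c <= 1%:R / 10%:R &
        9%:R / 10%:R * p * c ^+ 2 + #|cd.2|%:R / n%:R < c_ge R i.+1 cd.1]].

(* Let C be the number of agents at minute >= i and X the number of agents
   above minute i that are not early drip agents, so that
   X / n = c_{>=i+1} - d_{>=i+1}.  While C < n^{0.55} every agent above minute i
   is an early drip agent, so X = 0.  Afterwards X grows by at most one per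
   interaction, and only through a late drip (probability <= p C^2 / n^2) or an
   epidemic started by one of the X late agents (probability <= 2 X / n), while
   C grows with probability 2 C (n - C) / n^2.  Hence, with
   S = max (C, n^{0.55}), alpha = 0.9 p and exp lam = 1.02, the potential
   exp (lam X - lam alpha S^2 / n), stopped once c_{>=i} > 0.1, is a
   supermartingale outside bad states; it is >= 1 in a bad state and starts at
   exp (- lam alpha n^{0.1}).  Optional stopping bounds the probability of ever
   meeting a bad state by exp (- lam alpha n^{0.1}) = n^{-omega(1)}. *)

From HB Require Import structures.
From mathcomp Require Import all_boot all_order all_algebra.
From mathcomp Require Import reals sequences exp.
From mathcomp Require Import lra ring.
Set Implicit Arguments. Unset Strict Implicit. Unset Printing Implicit Defensive.
Import Order.TTheory GRing.Theory Num.Theory.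
Local Open Scope ring_scope.

Lemma big_tuple_cons (R : Type) (idx : R) (op : Monoid.com_law idx)
    (T : finType) (m : nat) (F : m.+1.-tuple T -> R) :
  \big[op/idx]_(t : m.+1.-tuple T) F t =
  \big[op/idx]_(x : T) \big[op/idx]_(t : m.-tuple T) F [tuple of x :: t].
Proof.
rewrite (pair_bigA _ (fun x (t : m.-tuple T) => F [tuple of x :: t])) /=.
rewrite (reindex (fun xt : T * m.-tuple T => [tuple of xt.1 :: xt.2])) //=.
exists (fun t : m.+1.-tuple T => (thead t, [tuple of behead t])).
  by move=> [x t] _; rewrite theadE; congr (_, _); apply: val_inj.
by move=> t _; rewrite -tuple_eta.
Qed.

Lemma big_tuple0 (R : Type) (idx : R) (op : Monoid.com_law idx)
    (T : finType) (F : 0.-tuple T -> R) :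
  \big[op/idx]_(t : 0.-tuple T) F t = F [tuple].
Proof. by rewrite (big_pred1 [tuple]) // => t; rewrite [t]tuple0 !inE eqxx. Qed.

Lemma ler_nat_of_bool (R : numDomainType) (b1 b2 : bool) :
  (b1 -> b2) -> (b1%:R : R) <= b2%:R.
Proof. by case: b1; case: b2 => // /(_ isT). Qed.

(* The drift of the potential above the threshold, divided by (n^2 times the
   pair weight): late events (left) are outweighed by the growth of the number
   of agents at minute >= i (right), where [c] is c_{>=i} and [y <= E (1 + y)]
   holds for [E = 1 - exp (- y)]. *)
Lemma drift_arith (R : realType) (p lam c E : R) :
  0 < p -> p <= 1 -> 1/51 <= lam <= 1/50 -> 0 <= c <= 1/10 -> 0 <= E ->
  let y := 2 * lam * (9/10 * p) * c in y <= E * (1 + y) ->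
  1/50 * (p + 2 * (9/10 * p)) * c ^+ 2 <= 2 * E * c * (1 - (1 + 9/10 * p) * c).
Proof.
move=> p_gt0 p_le1 /andP [lam_ge lam_le] /andP [c_ge0 c_le] E_ge0 y E_ge.
have pc_ge0 : 0 <= p * c by nra.
have y_le : y <= 9/2500.
  have : lam * (p * c) <= 1/50 * (1/10) by nra.
  rewrite /y; nra.
have y_ge : 2 * (1/51) * (9/10) * (p * c) <= y.
  have : 1/51 * (p * c) <= lam * (p * c) by nra.
  rewrite /y; nra.
have yE : y <= E * (2509/2500).
  have : E * y <= E * (9/2500) by nra.
  nra.
have room : 81/100 <= 1 - (1 + 9/10 * p) * c by nra.
have E_room : E * (81/100) <= E * (1 - (1 + 9/10 * p) * c) by nra.
have inner : 1/50 * (p + 2 * (9/10 * p)) * c <= 2 * E * (1 - (1 + 9/10 * p) * c).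
  have -> : 1/50 * (p + 2 * (9/10 * p)) * c = 14/250 * (p * c) by field.
  nra.
have -> : 1/50 * (p + 2 * (9/10 * p)) * c ^+ 2 = (1/50 * (p + 2 * (9/10 * p)) * c) * c by field.
have -> : 2 * E * c * (1 - (1 + 9/10 * p) * c) = (2 * E * (1 - (1 + 9/10 * p) * c)) * c by field.
exact: ler_wpM2r.
Qed.

Lemma expR_Nmul_powR_le_invn (R : realType) (k e : R) (c : nat) : 0 < k -> 0 < e ->
  exists N : nat, forall n : nat, (N <= n)%N -> expR (- (k * n%:R `^ e)) <= n%:R ^- c.
Proof.
move=> k_gt0 e_gt0; pose B : R := 2 * c%:R / (k * e ^+ 2).
exists (Num.Def.archi_bound (expR B)) => n le_Nn.
have lt_Bn : expR B < n%:R.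
  apply: lt_le_trans (archi_boundP (expR_ge0 B)) _; by rewrite ler_nat.
have n_gt0 : 0 < n%:R :> R by apply: lt_trans lt_Bn; apply: expR_gt0.
pose L := ln (n%:R : R).
have nE : n%:R = expR L by rewrite lnK // posrE.
have le_BL : B <= L by rewrite -ler_expR -nE ltW.
have kee_gt0 : 0 < k * e ^+ 2 by rewrite mulr_gt0 ?exprn_gt0.
have B_ge0 : 0 <= B.
  by rewrite divr_ge0 ?(ltW kee_gt0) ?mulr_ge0.
have L_ge0 := le_trans B_ge0 le_BL.
rewrite /powR (gt_eqF n_gt0) -/L [X in _ <= X ^- _]nE -expRM_natl -expRN ler_expR lerN2.
have := expR_ge1Dxn 1 (mulr_ge0 (ltW e_gt0) L_ge0).
have -> : (2`!%:R : R) = 2 by [].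
move=> le_exp.
have : c%:R <= k * e ^+ 2 * L / 2.
  by move: le_BL; rewrite /B ler_pdivrMr //; lra.
nra.
Qed.

Section HittingProbability.
Variables (R : realType) (X : finType) (S : Type).
Variables (w : X -> R) (step : S -> X -> S) (target : pred S).
Hypotheses (w_ge0 : forall x, 0 <= w x) (sum_w : \sum_x w x = 1).

Definition hits (m : nat) (s : S) (xs : seq X) : bool :=
  [exists k : 'I_m.+1, target (foldl step s (take k xs))].

Definition hit_prob (m : nat) (s : S) : R :=
  \sum_(xs : m.-tuple X | hits m s xs) \prod_(x <- xs) w x.

Lemma hits0 s xs : hits 0 s xs = target s.
Proof.
apply/existsP/idP => [[k]|hs]; first by rewrite (ord1 k) take0.
by exists ord0; rewrite take0.
Qed.

Lemma hitsS m s x xs : hits m.+1 s (x :: xs) = target s || hits m (step s x) xs.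
Proof.
apply/existsP/orP => [[[[|k] lt_k]]|[hs|/existsP [[k lt_k] hk]]] /=.
- by left.
- by right; apply/existsP; exists (Ordinal (lt_k : (k < m.+1)%N)).
- by exists ord0.
- by exists (Ordinal (lt_k : (k.+1 < m.+2)%N)).
Qed.

Lemma sum_prod_weights m : \sum_(xs : m.-tuple X) \prod_(x <- xs) w x = 1.
Proof.
elim: m => [|m IHm]; first by rewrite big_tuple0 big_nil.
rewrite big_tuple_cons -[RHS]sum_w; apply: eq_bigr => x _.
by under eq_bigr do rewrite big_cons; rewrite -mulr_sumr IHm mulr1.
Qed.

Lemma hit_prob0 s : hit_prob 0 s = (target s)%:R.
Proof.
rewrite /hit_prob big_mkcond big_tuple0 hits0 big_nil.
by case: (target s).
Qed.

Lemma hit_probS m s : hit_prob m.+1 s =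
  if target s then 1 else \sum_x w x * hit_prob m (step s x).
Proof.
rewrite /hit_prob big_mkcond big_tuple_cons.
under eq_bigr do under eq_bigr do rewrite hitsS big_cons.
case: (target s) => /=.
  rewrite -[RHS]sum_w; apply: eq_bigr => x _.
  by rewrite -mulr_sumr sum_prod_weights mulr1.
apply: eq_bigr => x _; rewrite mulr_sumr [RHS]big_mkcond; apply: eq_bigr => xs _.
by case: (hits m _ xs); rewrite ?mulr0.
Qed.

Lemma hit_prob_le_supermartingale (inv : pred S) (G : S -> R) :
  (forall s, 0 <= G s) ->
  (forall s x, inv s -> inv (step s x)) ->
  (forall s, inv s -> target s -> 1 <= G s) ->
  (forall s, inv s -> ~~ target s -> \sum_x w x * G (step s x) <= G s) ->
  forall m s, inv s -> hit_prob m s <= G s.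
Proof.
move=> G_ge0 inv_step G_target G_super; elim=> [|m IHm] s inv_s.
  by rewrite hit_prob0; case: (boolP (target s)) => [/(G_target _ inv_s)|].
rewrite hit_probS; case: ifP => [/(G_target _ inv_s)//|/negbT nt].
apply: le_trans (G_super _ inv_s nt); apply: ler_sum => x _.
by rewrite ler_wpM2l // IHm // inv_step.
Qed.

End HittingProbability.

Section OneStep.
Variables (R : realType) (n i : nat).

Definition state := (config n * {set 'I_n})%type.

Definition step_state (s : state) (x : interaction n) : state :=
  (clock_step s.1 x, early_step R i s.1 s.2 x).

Definition minute_ge (k : nat) (st : config n) : {set 'I_n} := [set y | (k <= st y)%N].

Lemma c_geE k st : c_ge R k st = #|minute_ge k st|%:R / n%:R.
Proof. by rewrite /c_ge cardsE. Qed.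

Lemma minute_ge_update k (st st' : config n) z v :
  (st z <= v)%N -> (forall y, st' y = if y == z then v else st y) ->
  minute_ge k st' = if (k <= v)%N then z |: minute_ge k st else minute_ge k st.
Proof.
move=> le_zv st'E; apply/setP => y.
case: ifP => le_kv; rewrite !inE st'E; case: (y =P z) => [->|_] //=.
by rewrite le_kv; apply/esym/negbTE; rewrite -ltnNge (leq_ltn_trans le_zv) // ltnNge le_kv.
Qed.

Definition late_drip (s : state) (x : interaction n) : bool :=
  let: (a, b, coin) := x in
  [&& coin, s.1 a == i, s.1 b == i & thr R n <= c_ge R i s.1].

Definition late_spread (s : state) (x : interaction n) : bool :=
  let: (a, b, _) := x in
  [&& (i < s.1 a)%N, a \notin s.2 & (s.1 b <= i)%N] ||
  [&& (i < s.1 b)%N, b \notin s.2 & (s.1 a <= i)%N].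

Definition late_event (s : state) (x : interaction n) : bool :=
  late_drip s x || late_spread s x.

Definition reach_event (st : config n) (x : interaction n) : bool :=
  let: (a, b, _) := x in
  ((i <= st a) && (st b < i))%N || ((i <= st b) && (st a < i))%N.

(* An interaction changes the minute of at most one agent [z] (to [v]); [added]
   tells whether [z] becomes an early drip agent. *)
Variant step_spec (s : state) (x : interaction n) : Prop :=
  StepSpec (z : 'I_n) (v : nat) (added : bool) of
    (s.1 z <= v)%N
  & (forall y, (step_state s x).1 y = if y == z then v else s.1 y)
  & (step_state s x).2 = (if added then z |: s.2 else s.2)
  & (added -> s.1 z <= i < v)%N
  & ((i < v)%N -> (s.1 z <= i)%N -> ~~ added -> late_event s x)
  & (reach_event s.1 x -> (s.1 z < i <= v)%N).

Lemma step_stateP s x : step_spec s x.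
Proof.
case: s x => st D [[a b] coin].
have [eq_ab|ne_ab] := eqVneq (st a) (st b).
  have no_reach : ~~ (i <= st b < i)%N by case: leqP.
  case: coin.
    apply: (StepSpec (z := b) (v := (st b).+1)
      (added := (st b == i) && (c_ge R i st < thr R n)));
      rewrite /step_state /clock_step /early_step /= ?eq_ab ?eqxx ?orbb ?(negbTE no_reach) //.
    - by case/andP => /eqP ->; rewrite leqnn ltnSn.
    - move=> lt_ib le_bi; have /eqP eq_bi : st b == i by rewrite eqn_leq le_bi.
      by rewrite eq_bi eqxx /= -leNgt /late_event /late_drip /= eq_ab eq_bi eqxx => ->.
  apply: (StepSpec (z := b) (v := st b) (added := false));
    rewrite /step_state /clock_step /early_step /= ?eq_ab ?eqxx ?orbb ?(negbTE no_reach) //.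
  - by move=> y; case: eqP => [->|].
  - by move=> lt_ib le_bi; have := leq_ltn_trans le_bi lt_ib; rewrite ltnn.
have [lt_ba|le_ab] := ltnP (st b) (st a).
  apply: (StepSpec (z := b) (v := st a) (added := [&& (st b <= i)%N, (i < st a)%N & a \in D]));
    rewrite /step_state /clock_step /early_step /= ?(negbTE ne_ab) ?lt_ba //.
  - exact: ltnW.
  - by case/and3P => -> ->.
  - move=> lt_ia le_bi; rewrite lt_ia le_bi /= => aD.
    by rewrite /late_event /late_spread lt_ia aD le_bi orbT.
  - case/orP => /andP [le_ia lt_bi]; first by rewrite lt_bi le_ia.
    by have := ltn_trans (leq_ltn_trans le_ia lt_ba) lt_bi; rewrite ltnn.
have lt_ab : (st a < st b)%N by rewrite ltn_neqAle ne_ab.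
apply: (StepSpec (z := a) (v := st b) (added := [&& (st a <= i)%N, (i < st b)%N & b \in D]));
  rewrite /step_state /clock_step /early_step /= ?(negbTE ne_ab) ?(leq_gtF le_ab) //.
- by case/and3P => -> ->.
- move=> lt_ib le_ai; rewrite lt_ib le_ai /= => bD.
  by rewrite /late_event /late_spread lt_ib bD le_ai !orbT.
- case/orP => /andP [le_ia lt_bi]; last by rewrite lt_bi le_ia.
  by have := ltn_trans (leq_ltn_trans le_ia lt_ab) lt_bi; rewrite ltnn.
Qed.

End OneStep.

Section StepConsequences.
Variables (R : realType) (n i : nat).
Implicit Types (s : state n) (x : interaction n).

Local Notation step := (step_state R i).
Local Notation above st := (minute_ge i.+1 st).

Lemma step_minute_mono s x y : (s.1 y <= (step s x).1 y)%N.
Proof. by case: (step_stateP R i s x) => z v added le_zv -> *; case: eqP => [->|]. Qed.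

Lemma minute_ge_step_sub k s x : minute_ge k s.1 \subset minute_ge k (step s x).1.
Proof.
by apply/subsetP => y; rewrite !inE => /leq_trans; apply; apply: step_minute_mono.
Qed.

Lemma c_ge_step_mono k s x : c_ge R k s.1 <= c_ge R k (step s x).1.
Proof.
rewrite !c_geE ler_wpM2r ?invr_ge0 // ler_nat.
exact/subset_leq_card/minute_ge_step_sub.
Qed.

Lemma card_reached_step s x : reach_event i s.1 x ->
  #|minute_ge i (step s x).1| = #|minute_ge i s.1|.+1.
Proof.
case: (step_stateP R i s x) => z v added le_zv stE _ _ _ reach /reach /andP [lt_zi le_iv].
by rewrite (minute_ge_update _ le_zv stE) le_iv cardsU1 inE leqNgt lt_zi.
Qed.

Lemma late_drip_no_reach s x : late_drip R i s x -> ~~ reach_event i s.1 x.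
Proof.
by case: x => [[a b] coin] /and4P [_ /eqP ea /eqP eb _]; rewrite /reach_event ea eb ltnn !andbF.
Qed.

Definition early_inv (s : state n) : bool :=
  (s.2 \subset above s.1) &&
  ((c_ge R i s.1 < thr R n) ==> (above s.1 \subset s.2)).

Lemma no_late_event_below_thr s x :
  c_ge R i s.1 < thr R n -> above s.1 \subset s.2 -> ~~ late_event R i s x.
Proof.
case: x => [[a b] coin] lt_thr above_sub; rewrite /late_event /late_drip /late_spread /=.
rewrite leNgt lt_thr !andbF /=; apply/norP; split; apply/and3P => -[lt_i nD _];
  by move: nD; rewrite (subsetP above_sub) // inE.
Qed.

Lemma early_inv_step s x : early_inv s -> early_inv (step s x).
Proof.
case/andP => D_sub below_thr; apply/andP; split.
  case: (step_stateP R i s x) => z v added le_zv stE -> added_le _ _.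
  have D_sub' := subset_trans D_sub (minute_ge_step_sub i.+1 s x).
  case: added added_le => [/(_ isT) /andP [_ lt_iv]|_] //.
  by rewrite subUset sub1set D_sub' (minute_ge_update _ le_zv stE) lt_iv setU11.
apply/implyP => lt_thr'.
have lt_thr := le_lt_trans (c_ge_step_mono i s x) lt_thr'.
have above_sub := implyP below_thr lt_thr.
have no_late := no_late_event_below_thr x lt_thr above_sub.
case: (step_stateP R i s x) => z v added le_zv stE -> _ late _.
rewrite (minute_ge_update _ le_zv stE).
have D_grows : s.2 \subset (if added then z |: s.2 else s.2).
  by case: added {late}; rewrite ?subsetUr.
have [lt_iv|_] := boolP (i < v)%N; last exact: subset_trans above_sub D_grows.
have [z_above|z_below] := boolP (z \in above s.1).
  by rewrite (setUidPr _) ?sub1set //; apply: subset_trans above_sub D_grows.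
have le_zi : (s.1 z <= i)%N by rewrite inE -leqNgt in z_below.
case: added late {D_grows} => [_|/(_ lt_iv le_zi isT) late]; first exact: setUS.
by rewrite late in no_late.
Qed.

(* X = n (c_{>=i+1} - d_{>=i+1}) *)
Definition excess (s : state n) : R := #|above s.1|%:R - #|s.2|%:R.

Lemma excess_step s x : s.2 \subset above s.1 ->
  excess (step s x) <= excess s + (late_event R i s x)%:R.
Proof.
move=> D_sub; rewrite /excess.
case: (step_stateP R i s x) => z v added le_zv stE -> added_le late _.
rewrite (minute_ge_update _ le_zv stE).
have ind_ge0 := ler0n R (late_event R i s x).
have [lt_iv|not_lt_iv] := boolP (i < v)%N; last first.
  case: added added_le late => [/(_ isT) /andP [_ lt_iv]|_ _]; last lra.
  by rewrite lt_iv in not_lt_iv.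
have [z_above|z_below] := boolP (z \in above s.1).
  rewrite (setUidPr _) ?sub1set //.
  have := ler0n R (z \notin s.2).
  by case: added {added_le late}; rewrite ?cardsU1 ?natrD; lra.
have zD : z \notin s.2 by apply: contra z_below; apply: (subsetP D_sub).
have le_zi : (s.1 z <= i)%N by rewrite inE -leqNgt in z_below.
rewrite cardsU1 z_below natrD.
case: added added_le late => [_ _|_ /(_ lt_iv le_zi isT) ->].
  by rewrite cardsU1 zD natrD; lra.
lra.
Qed.

End StepConsequences.

Section Interactions.
Variables (R : realType) (n : nat) (p : R).
Hypotheses (p_ge0 : 0 <= p) (p_le1 : p <= 1) (n_gt1 : (1 < n)%N).
Implicit Types (x : interaction n) (a b : 'I_n).

Definition pair_weight : R := (n%:R * (n%:R - 1))^-1.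

Lemma pair_weight_ge0 : 0 <= pair_weight.
Proof. by rewrite invr_ge0 mulr_ge0 // subr_ge0 ler1n ltnW. Qed.

Lemma sum_indicator (A : {set 'I_n}) : \sum_a (a \in A)%:R = #|A|%:R :> R.
Proof.
by rewrite -sum1_card natr_sum [RHS]big_mkcond; apply: eq_bigr => a _; case: (a \in A).
Qed.

Lemma sum_interaction (F : interaction n -> R) :
  \sum_x F x = \sum_a \sum_b (F (a, b, true) + F (a, b, false)).
Proof.
transitivity (\sum_(x : 'I_n * 'I_n * bool) F (x.1, x.2)); first by apply: eq_bigr => -[].
rewrite -(pair_bigA _ (fun ab c => F (ab, c))).
rewrite (pair_bigA _ (fun a b => F (a, b, true) + F (a, b, false))).
by apply: eq_bigr => -[a b] _; rewrite big_bool.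
Qed.

Lemma iweight_ge0 x : 0 <= iweight p x.
Proof.
case: x => [[a b] coin]; rewrite /iweight; case: (a != b) => //.
by rewrite mulr_ge0 ?pair_weight_ge0 //; case: coin; rewrite ?subr_ge0.
Qed.

Lemma iweight_coin_le a b : iweight p (a, b, true) <= pair_weight * p.
Proof. by rewrite /iweight; case: (a != b); rewrite // mulr_ge0 ?pair_weight_ge0. Qed.

Lemma iweight_pair a b :
  iweight p (a, b, true) + iweight p (a, b, false) = (a != b)%:R * pair_weight.
Proof.
rewrite /iweight; case: (a != b); rewrite ?mul0r ?addr0 //.
by rewrite -mulrDr addrCA subrr addr0 mulr1 mul1r.
Qed.

Lemma expect_coin_free (E : interaction n -> R) :
  (forall a b, E (a, b, true) = E (a, b, false)) ->
  \sum_x iweight p x * E x = pair_weight * \sum_a \sum_b (a != b)%:R * E (a, b, true).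
Proof.
move=> E_coin; rewrite sum_interaction mulr_sumr; apply: eq_bigr => a _.
rewrite mulr_sumr; apply: eq_bigr => b _.
by rewrite -E_coin -mulrDl iweight_pair mulrCA mulrA.
Qed.

Lemma sum_iweight : \sum_(x : interaction n) iweight p x = 1.
Proof.
have n_gt0 : (0 < n)%N by apply: ltnW.
rewrite sum_interaction.
under eq_bigr => a _.
  under eq_bigr => b _ do rewrite iweight_pair eq_sym -in_setC1.
  rewrite -mulr_suml sum_indicator cardsC1 card_ord.
  over.
have n1_neq0 : (n%:R : R) - 1 != 0 by rewrite subr_eq0 pnatr_eq1 gtn_eqF.
rewrite sumr_const card_ord /pair_weight -subn1 natrB // -mulr_natl.
by field; rewrite n1_neq0 pnatr_eq0 -lt0n n_gt0.
Qed.

End Interactions.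

Section EventProbabilities.
Variables (R : realType) (n i : nat) (p : R).
Hypotheses (p_ge0 : 0 <= p) (p_le1 : p <= 1) (n_gt1 : (1 < n)%N).
Implicit Types (s : state n) (x : interaction n).

Local Notation reached st := (minute_ge i st).
Local Notation above st := (minute_ge i.+1 st).
Local Notation u := (pair_weight R n).

Lemma sum_indicator_pair (A B : {set 'I_n}) :
  \sum_a \sum_b ((a \in A)%:R * (b \in B)%:R) = #|A|%:R * #|B|%:R :> R.
Proof.
rewrite -!sum_indicator mulr_suml; apply: eq_bigr => a _.
by rewrite mulr_sumr.
Qed.

Lemma expect_late_drip s :
  \sum_x iweight p x * (late_drip R i s x)%:R <= u * p * #|reached s.1|%:R ^+ 2.
Proof.
rewrite expr2 -sum_indicator_pair mulr_sumr sum_interaction.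
apply: ler_sum => a _; rewrite mulr_sumr; apply: ler_sum => b _.
rewrite [late_drip _ _ _ (a, b, false)]/= mulr0 addr0.
apply: ler_pM; rewrite ?iweight_ge0 ?ler0n ?iweight_coin_le //.
rewrite -natrM mulnb; apply: ler_nat_of_bool.
by case/and4P => _ /eqP ea /eqP eb _; rewrite !inE ea eb leqnn.
Qed.

Lemma expect_late_spread s : s.2 \subset above s.1 ->
  \sum_x iweight p x * (late_spread i s x)%:R <= u * (2 * n%:R * excess R i s).
Proof.
move=> D_sub; set Y := above s.1 :\: s.2.
have card_Y : #|Y|%:R = excess R i s.
  by rewrite /excess cardsD (setIidPr D_sub) natrB // subset_leq_card.
rewrite expect_coin_free // ler_wpM2l ?pair_weight_ge0 //.
apply: le_trans (_ : _ <= \sum_a \sum_b ((a \in Y)%:R + (b \in Y)%:R)) _.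
  apply: ler_sum => a _; apply: ler_sum => b _.
  apply: le_trans (_ : _ <= ((a \in Y) || (b \in Y))%:R) _.
    rewrite -natrM mulnb; apply: ler_nat_of_bool => /andP [_].
    by rewrite !inE; case/orP => /and3P [-> -> _]; rewrite ?orbT.
  by case: (a \in Y); case: (b \in Y); rewrite ?addr0 ?add0r ?lerDl.
rewrite -card_Y; under eq_bigr do rewrite big_split /=.
rewrite big_split /=.
under eq_bigr do rewrite sumr_const card_ord.
under [X in _ + X]eq_bigr do rewrite sum_indicator.
by rewrite sumrMnl sum_indicator sumr_const card_ord -mulrnDl -mulr_natr; lra.
Qed.

Lemma expect_reach s :
  \sum_x iweight p x * (reach_event i s.1 x)%:R =
  u * (2 * #|reached s.1|%:R * (n%:R - #|reached s.1|%:R)).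
Proof.
set G := reached s.1; rewrite expect_coin_free //; congr (_ * _).
transitivity (\sum_a \sum_b
  ((a \in G)%:R * (1 - (b \in G)%:R) + (b \in G)%:R * (1 - (a \in G)%:R)) : R).
  apply: eq_bigr => a _; apply: eq_bigr => b _; rewrite /G !inE /=.
  case: (a =P b) => [->|_] /=; case: (leqP i (s.1 a)); case: (leqP i (s.1 b));
    by rewrite ?mul0r ?mul1r ?subrr ?mulr0 ?subr0 ?mulr1 ?addr0 ?add0r.
have half : \sum_a \sum_b ((a \in G)%:R * (1 - (b \in G)%:R)) = #|G|%:R * (n%:R - #|G|%:R) :> R.
  rewrite -sum_indicator mulr_suml; apply: eq_bigr => a _.
  by rewrite -mulr_sumr sumrB sumr_const card_ord sum_indicator.
under eq_bigr do rewrite big_split /=.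
by rewrite big_split /= [X in _ + X]exchange_big /= half; ring.
Qed.

End EventProbabilities.

Section Potential.
Variables (R : realType) (n i : nat) (p : R).
Hypotheses (p_gt0 : 0 < p) (p_le1 : p <= 1) (n_gt1 : (1 < n)%N).
Implicit Types (s : state n) (x : interaction n).

Local Notation step := (step_state R i).
Local Notation reached st := (minute_ge i st).
Local Notation above st := (minute_ge i.+1 st).
Local Notation c s := (c_ge R i s.1).

(* Written exactly as the body of [bad], so that [Prob p (bad p i T)] is
   convertible to a hitting probability. *)
Definition bad_state s : bool :=
  [&& thr R n <= c s, c s <= 1%:R / 10%:R &
      9%:R / 10%:R * p * c s ^+ 2 + #|s.2|%:R / n%:R < c_ge R i.+1 s.1].

Definition lam : R := ln (51 / 50).
Definition alpha : R := 9%:R / 10%:R * p.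
Definition kappa : R := lam * alpha / n%:R.
Definition min_mass : R := thr R n * n%:R.
Definition mass s : R := Num.max #|reached s.1|%:R min_mass.
Definition potential s : R := expR (lam * excess R i s - kappa * mass s ^+ 2).

Let n_gt0 : 0 < n%:R :> R.
Proof. by rewrite ltr0n ltnW. Qed.

Lemma expR_lam : expR lam = 51 / 50.
Proof. by rewrite lnK // posrE divr_gt0. Qed.

Lemma lam_bounds : 1/51 <= lam <= 1/50.
Proof.
apply/andP; split; last first.
  by rewrite /lam (_ : 51 / 50 = 1 + 1 / 50 :> R) ?le_ln1Dx //; [lra | field].
have := expR_ge1Dx (- lam); rewrite expRN expR_lam.
by rewrite (_ : (51 / 50 : R)^-1 = 50 / 51) //; [lra | field].
Qed.

Lemma alpha_gt0 : 0 < alpha.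
Proof. by rewrite mulr_gt0 // divr_gt0 // ltr0n. Qed.

Lemma kappa_ge0 : 0 <= kappa.
Proof.
have /andP [lam_ge _] := lam_bounds.
by rewrite divr_ge0 // mulr_ge0 // ?(ltW alpha_gt0) //; lra.
Qed.

Lemma min_mass_ge0 : 0 <= min_mass.
Proof. by rewrite mulr_ge0 // ltW // ?n_gt0 // powR_gt0 // n_gt0. Qed.

Lemma mass_step_mono s x : mass s <= mass (step s x).
Proof.
apply: le_max2 (lexx _); rewrite ler_nat.
exact/subset_leq_card/minute_ge_step_sub.
Qed.

Lemma potential_le_mul_expR s s' d :
  lam * excess R i s' - kappa * mass s' ^+ 2 <= lam * excess R i s - kappa * mass s ^+ 2 + d ->
  potential s' <= potential s * expR d.
Proof. by move=> le_exp; rewrite /potential -expRD ler_expR. Qed.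

Lemma mass_ge0 s : 0 <= mass s.
Proof. by rewrite le_max min_mass_ge0 orbT. Qed.

Lemma mass_sq_step_mono s x : kappa * mass s ^+ 2 <= kappa * mass (step s x) ^+ 2.
Proof.
apply: ler_wpM2l; first exact: kappa_ge0.
by rewrite !expr2 ler_pM ?mass_ge0 ?mass_step_mono.
Qed.

Lemma thr_le_cE s : (thr R n <= c s) = (min_mass <= #|reached s.1|%:R).
Proof. by rewrite c_geE ler_pdivlMr // n_gt0. Qed.

Lemma mass_above_thr s : thr R n <= c s -> mass s = #|reached s.1|%:R.
Proof. by rewrite thr_le_cE => le_min; rewrite /mass max_l. Qed.

Lemma bad_stateE s : thr R n <= c s -> c s <= 1%:R / 10%:R ->
  bad_state s = (alpha * #|reached s.1|%:R ^+ 2 / n%:R < excess R i s).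
Proof.
move=> le_thr le_10; rewrite /bad_state le_thr le_10 /= -subr_lt0 -[RHS]subr_lt0.
have -> : 9%:R / 10%:R * p * c s ^+ 2 + #|s.2|%:R / n%:R - c_ge R i.+1 s.1 =
          (alpha * #|reached s.1|%:R ^+ 2 / n%:R - excess R i s) / n%:R.
  by rewrite /alpha /excess !c_geE; field; rewrite gt_eqF ?n_gt0.
by rewrite pmulr_llt0 // invr_gt0 n_gt0.
Qed.

Lemma potential_ge1 s : bad_state s -> 1 <= potential s.
Proof.
move=> bad_s; have /and3P [le_thr le_10 _] := bad_s.
move: bad_s; rewrite bad_stateE // => lt_excess.
have /andP [lam_ge _] := lam_bounds.
rewrite /potential mass_above_thr // -[X in X <= _]expR0 ler_expR subr_ge0.
have -> : kappa * #|reached s.1|%:R ^+ 2 = lam * (alpha * #|reached s.1|%:R ^+ 2 / n%:R).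
  by rewrite /kappa; ring.
by rewrite ler_pM2l ?ltW //; lra.
Qed.

Lemma potential_step_below_thr s x : early_inv R i s -> c s < thr R n ->
  potential (step s x) <= potential s.
Proof.
case/andP => D_sub /implyP below_thr lt_thr.
rewrite -[potential s]mulr1 -expR0; apply: potential_le_mul_expR.
have := excess_step R x D_sub.
rewrite (negbTE (no_late_event_below_thr x lt_thr (below_thr lt_thr))).
have /andP [lam_ge _] := lam_bounds; have := mass_sq_step_mono s x.
rewrite addr0 => le_mass le_excess.
have : lam * excess R i (step s x) <= lam * excess R i s by rewrite ler_wpM2l //; lra.
lra.
Qed.

Definition shrink s : R := 1 - expR (- (2 * kappa * #|reached s.1|%:R)).

(* Bounds the factor by which one step multiplies the potential above the
   threshold: [expR lam = 1 + 1/50] for a late event, [1 - shrink s] when an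
   agent newly reaches minute i. *)
Definition gain s x : R :=
  1 + 1/50 * (late_drip R i s x)%:R + (1/50 + shrink s) * (late_spread i s x)%:R
    - shrink s * (reach_event i s.1 x)%:R.

Lemma shrink_ge0 s : 0 <= shrink s.
Proof.
by rewrite subr_ge0 expR_le1 oppr_le0 mulr_ge0 // mulr_ge0 // kappa_ge0.
Qed.

Lemma potential_step_le_gain s x : s.2 \subset above s.1 -> thr R n <= c s ->
  potential (step s x) <= potential s * gain s x.
Proof.
move=> D_sub le_thr; pose C : R := #|reached s.1|%:R.
have le_excess := excess_step R x D_sub; have le_mass := mass_sq_step_mono s x.
have /andP [lam_ge _] := lam_bounds; have E_ge0 := shrink_ge0 s.
have pot_ge0 : 0 <= potential s by apply: expR_ge0.
have ind_ge0 (b : bool) : 0 <= b%:R :> R by [].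
have [late|no_late] := boolP (late_event R i s x).
  apply: le_trans (potential_le_mul_expR (s := s) (d := lam) _) _.
    rewrite late in le_excess.
    have : lam * excess R i (step s x) <= lam * (excess R i s + 1) by rewrite ler_wpM2l //; lra.
    lra.
  rewrite expR_lam ler_wpM2l // /gain.
  have [spread|no_spread] := boolP (late_spread i s x).
    have : shrink s * (reach_event i s.1 x)%:R <= shrink s.
      by rewrite ler_piMr //; case: (reach_event i s.1 x).
    by have := ind_ge0 (late_drip R i s x); rewrite [true%:R]/= mulr1n; lra.
  move: late; rewrite /late_event (negbTE no_spread) orbF => drip.
  by rewrite drip (negbTE (late_drip_no_reach drip)) /= mulr1n !mulr0; lra.
rewrite (negbTE no_late) addr0 in le_excess.
have : lam * excess R i (step s x) <= lam * excess R i s by rewrite ler_wpM2l //; lra.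
move: no_late; rewrite /late_event negb_or /gain => /andP [/negbTE -> /negbTE ->] /=.
rewrite !mulr0 !addr0 => le_lam.
have [reach|_] := boolP (reach_event i s.1 x); rewrite /= ?mulr1n ?mulr0 ?subr0; last first.
  apply: le_trans (potential_le_mul_expR (s := s) (d := 0) _) _; last by rewrite expR0.
  lra.
have le_C1 : C + 1 <= mass (step s x).
  by rewrite /mass le_max (card_reached_step R reach) -natr1 lexx.
have : kappa * (C + 1) ^+ 2 <= kappa * mass (step s x) ^+ 2.
  by rewrite ler_wpM2l ?kappa_ge0 // !expr2 ler_pM // ?addr_ge0.
rewrite mulr1 /shrink opprB addrCA subrr addr0 -/C => le_mass_step.
have sqE : kappa * (C + 1) ^+ 2 = kappa * C ^+ 2 + 2 * kappa * C + kappa by ring.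
rewrite sqE in le_mass_step; apply: potential_le_mul_expR; rewrite (mass_above_thr le_thr) -/C.
by have := kappa_ge0; lra.
Qed.

Lemma shrink_lower_bound s :
  2 * kappa * #|reached s.1|%:R <= shrink s * (1 + 2 * kappa * #|reached s.1|%:R).
Proof.
set y := 2 * kappa * _; have y_ge0 : 0 <= y by rewrite mulr_ge0 // mulr_ge0 // kappa_ge0.
have : expR (- y) * (1 + y) <= expR (- y) * expR y by rewrite ler_wpM2l ?expR_ge0 ?expR_ge1Dx.
by rewrite -expRD addNr expR0 /shrink -/y mulrBl mul1r; lra.
Qed.

Lemma expect_gain_le1 s : s.2 \subset above s.1 -> thr R n <= c s ->
  c s <= 1%:R / 10%:R -> ~~ bad_state s -> \sum_x iweight p x * gain s x <= 1.
Proof.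
move=> D_sub le_thr le_10; rewrite bad_stateE // -leNgt => le_excess.
pose C : R := #|reached s.1|%:R; pose E := shrink s.
have -> : \sum_x iweight p x * gain s x =
    \sum_(x : interaction n) iweight p x + 1/50 * \sum_x iweight p x * (late_drip R i s x)%:R
    + (1/50 + E) * \sum_x iweight p x * (late_spread i s x)%:R
    - E * \sum_x iweight p x * (reach_event i s.1 x)%:R.
  rewrite !mulr_sumr -!big_split -sumrB; apply: eq_bigr => x _; rewrite /gain -/E /=; ring.
rewrite sum_iweight // (expect_reach i p s).
have u_ge0 := pair_weight_ge0 R n_gt1; have E_ge0 : 0 <= E := shrink_ge0 s.
have c50_ge0 : 0 <= 1/50 :> R by lra.
have nC : n%:R * excess R i s <= alpha * C ^+ 2.
  by rewrite mulrC -ler_pdivlMr ?n_gt0.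
have P1 := expect_late_drip i (ltW p_gt0) p_le1 n_gt1 s.
have P2 := expect_late_spread p n_gt1 D_sub.
have {}P1 : 1/50 * \sum_x iweight p x * (late_drip R i s x)%:R <=
    1/50 * (pair_weight R n * p * C ^+ 2) by rewrite ler_wpM2l.
have {}P2 : (1/50 + E) * \sum_x iweight p x * (late_spread i s x)%:R <=
    (1/50 + E) * (pair_weight R n * (2 * (alpha * C ^+ 2))).
  apply: ler_wpM2l; first exact: addr_ge0.
  by apply: le_trans P2 _; rewrite ler_wpM2l // -mulrA ler_wpM2l.
have C_eq : C = c s * n%:R by rewrite /C c_geE divfK // gt_eqF // n_gt0.
have c_ge0 : 0 <= c s by rewrite c_geE divr_ge0.
have arith := drift_arith p_gt0 p_le1 lam_bounds _ E_ge0.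
have key : 1/50 * p * C ^+ 2 + (1/50 + E) * (2 * (alpha * C ^+ 2)) - E * (2 * C * (n%:R - C)) <= 0.
  have y_le := shrink_lower_bound s.
  have yE : 2 * kappa * #|reached s.1|%:R = 2 * lam * (9/10 * p) * c s.
    by rewrite -/C C_eq /kappa /alpha; field; rewrite gt_eqF ?n_gt0.
  rewrite yE -/E in y_le.
  have := arith (c s); rewrite c_ge0 le_10 => /(_ isT y_le) le_c.
  rewrite C_eq /alpha; nra.
have := mulr_ge0_le0 u_ge0 key; rewrite -/C; lra.
Qed.

Definition stopped_potential s : R :=
  if c s <= 1%:R / 10%:R then potential s else 0.

Lemma stopped_potential_ge0 s : 0 <= stopped_potential s.
Proof. by rewrite /stopped_potential; case: ifP => // _; apply: expR_ge0. Qed.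

Lemma stopped_potential_le s : stopped_potential s <= potential s.
Proof. by rewrite /stopped_potential; case: ifP => // _; apply: expR_ge0. Qed.

Lemma stopped_potential_ge1 s : bad_state s -> 1 <= stopped_potential s.
Proof.
move=> bad_s; have /and3P [_ le_10 _] := bad_s.
by rewrite /stopped_potential le_10; apply: potential_ge1.
Qed.

Lemma stopped_potential_supermartingale s : early_inv R i s -> ~~ bad_state s ->
  \sum_x iweight p x * stopped_potential (step s x) <= stopped_potential s.
Proof.
move=> inv_s not_bad; have w_ge0 := iweight_ge0 (ltW p_gt0) p_le1 n_gt1.
rewrite {2}/stopped_potential; case: ifP => [le_10|gt_10]; last first.
  rewrite big1 // => x _; rewrite /stopped_potential ifF ?mulr0 //.
  by apply: contraFF gt_10; apply: le_trans; apply: c_ge_step_mono.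
apply: le_trans (_ : _ <= \sum_(x : interaction n) iweight p x * potential (step s x)) _.
  by apply: ler_sum => x _; rewrite ler_wpM2l ?w_ge0 ?stopped_potential_le.
have /andP [D_sub _] := inv_s.
have [lt_thr|le_thr] := ltP (c s) (thr R n).
  apply: le_trans (_ : _ <= \sum_(x : interaction n) iweight p x * potential s) _.
    by apply: ler_sum => x _; rewrite ler_wpM2l ?w_ge0 ?potential_step_below_thr.
  by rewrite -mulr_suml sum_iweight // mul1r.
apply: le_trans (_ : _ <= \sum_(x : interaction n) potential s * (iweight p x * gain s x)) _.
  apply: ler_sum => x _; rewrite mulrCA ler_wpM2l ?w_ge0 //.
  exact: potential_step_le_gain.
rewrite -mulr_sumr ler_piMr ?expR_ge0 //; exact: expect_gain_le1.
Qed.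

Lemma kappa_min_mass : kappa * min_mass ^+ 2 = lam * alpha * n%:R `^ (1/10).
Proof.
have n_neq0 : n%:R != 0 :> R by rewrite gt_eqF ?n_gt0.
have thr_sq : thr R n ^+ 2 * n%:R = n%:R `^ (1/10).
  rewrite /thr -powR_mulrn ?powR_ge0 // -powRrM -[X in _ * X]powRr1 ?ler0n //.
  by rewrite -powRD ?n_neq0 ?implybT //; congr (_ `^ _); field.
by rewrite /kappa /min_mass -thr_sq; field.
Qed.

Lemma init_above : minute_ge i.+1 (@init_config n) = set0.
Proof. by apply/setP => y; rewrite !inE. Qed.

Lemma potential_init : potential (@init_config n, set0) <= expR (- (lam * alpha * n%:R `^ (1/10))).
Proof.
rewrite /potential /excess /= init_above cards0 subrr mulr0 sub0r ler_expR lerN2.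
rewrite -kappa_min_mass ler_wpM2l ?kappa_ge0 // !expr2 ler_pM ?min_mass_ge0 //;
  by rewrite le_max lexx orbT.
Qed.

Lemma Prob_bad_le_expR T : Prob p (@bad R n p i T) <= expR (- (lam * alpha * n%:R `^ (1/10))).
Proof.
have -> : Prob p (@bad R n p i T) =
  hit_prob (iweight p) step bad_state T (@init_config n, set0) by [].
have inv_init : early_inv R i (@init_config n, set0).
  by rewrite /early_inv /= !sub0set implybT.
apply: le_trans (potential_init); apply: le_trans (stopped_potential_le _).
apply: (hit_prob_le_supermartingale (iweight_ge0 (ltW p_gt0) p_le1 n_gt1)
  (sum_iweight p n_gt1) (inv := early_inv R i)) => //.
- exact: stopped_potential_ge0.
- exact: early_inv_step.
- by move=> s _; apply: stopped_potential_ge1.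
- exact: stopped_potential_supermartingale.
Qed.

End Potential.

Theorem mainTheorem1 (R : realType) (p : R) (hp0 : 0 < p) (hp1 : p <= 1) :
  forall K c : nat, exists N : nat, forall n : nat, (N <= n)%N ->
  forall i : nat,
    @Prob R n p (n ^ K.+1)%N (@bad R n p i (n ^ K.+1)%N) <= n%:R ^- c.
Proof.
move=> K c.
have k_gt0 : 0 < lam R * alpha p.
  by rewrite mulr_gt0 ?alpha_gt0 //; have /andP [lam_ge _] := lam_bounds R; lra.
have [N decay] : exists N : nat, forall n : nat, (N <= n)%N ->
    expR (- (lam R * alpha p * n%:R `^ (1/10))) <= n%:R ^- c.
  by apply: expR_Nmul_powR_le_invn; rewrite ?k_gt0 ?divr_gt0.
exists (maxn 2 N) => n; rewrite geq_max => /andP [n_gt1 le_Nn] i.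
by apply: le_trans (Prob_bad_le_expR i hp0 hp1 n_gt1 _) (decay n le_Nn).
Qed.
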